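(* Let $G=(V,E)$ have positive edge weights $w$ with $w_e\le\lambda$ for all $e$, and let $OPT$ be the optimum of the bounded forest cover problem on $(G,w,\lambda)$. Define $w'_e=1$ if $w_e>\lambda/2$ and $w'_e=2w_e/\lambda$ otherwise, and let $OPT'$ be the minimum weighted index of a forest cover of $G$ with respect to $w'$. Then $OPT'\le 3\cdot OPT$.
   Context: Bounded forest cover: given a graph $G$ with positive edge weights $w$ and $\lambda\ge0$, find trees $T_1,\dots,T_k$ in $G$, each of total edge weight at most $\lambda$, such that $\bigcup_i V(T_i)$ is a vertex cover of $G$, minimizing $k$. A forest cover of $G$ is a forest $F\subseteq G$ (single-vertex trees allowed) whose vertex set is a vertex cover of $G$; with weights $w'$, its weighted index is $wi(F)=\sum_{e\in E(F)}w'_e+(\text{number of trees of }F)$. *)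

From mathcomp Require Import all_boot all_order all_algebra.
Set Implicit Arguments. Unset Strict Implicit. Unset Printing Implicit Defensive.
Import Order.TTheory GRing.Theory Num.Theory.
Local Open Scope ring_scope.

Section Graphs.
Variable T : finType.

Definition simple_graph (adj : rel T) : Prop := symmetric adj /\ irreflexive adj.

(* Edges are represented as 2-element vertex sets. *)
Definition edges (adj : rel T) : {set {set T}} :=
  [set [set x; y] | x in T, y in T & adj x y].

Definition erel (F : {set {set T}}) : rel T := fun x y => [set x; y] \in F.

Definition subgraph (adj : rel T) (S : {set T}) (F : {set {set T}}) : Prop :=
  F \subset edges adj /\ (forall f, f \in F -> f \subset S).

Definition acyclic (F : {set {set T}}) : Prop :=
  forall p : seq T, uniq p -> (3 <= size p)%N -> ~~ cycle (erel F) p.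

Definition connected_sub (S : {set T}) (F : {set {set T}}) : Prop :=
  forall x y, x \in S -> y \in S -> connect (erel F) x y.

Definition is_tree (adj : rel T) (S : {set T}) (F : {set {set T}}) : Prop :=
  [/\ subgraph adj S F, S != set0, connected_sub S F & acyclic F].

(* A forest of G (single-vertex trees allowed). *)
Definition is_forest (adj : rel T) (S : {set T}) (F : {set {set T}}) : Prop :=
  subgraph adj S F /\ acyclic F.

Definition vertex_cover (adj : rel T) (S : {set T}) : Prop :=
  forall x y, adj x y -> (x \in S) || (y \in S).

Definition n_components (S : {set T}) (F : {set {set T}}) : nat :=
  #|[set [set y in S | connect (erel F) x y] | x in S]|.

Definition forest_cover (adj : rel T) (S : {set T}) (F : {set {set T}}) : Prop :=
  is_forest adj S F /\ vertex_cover adj S.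

Definition weight (R : numDomainType) (w : {set T} -> R) (F : {set {set T}}) : R :=
  \sum_(f in F) w f.

Definition weighted_index (R : numDomainType) (w' : {set T} -> R)
  (S : {set T}) (F : {set {set T}}) : R :=
  weight w' F + (n_components S F)%:R.

Definition bfc_feasible (R : numDomainType) (adj : rel T) (w : {set T} -> R)
  (lambda : R) (k : nat) : Prop :=
  exists trees : 'I_k -> {set T} * {set {set T}},
    (forall i, is_tree adj (trees i).1 (trees i).2) /\
    (forall i, weight w (trees i).2 <= lambda) /\
    vertex_cover adj (\bigcup_(i < k) (trees i).1).

Definition bfc_opt (R : numDomainType) (adj : rel T) (w : {set T} -> R)
  (lambda : R) (k : nat) : Prop :=
  bfc_feasible adj w lambda k /\
  (forall k', bfc_feasible adj w lambda k' -> (k <= k')%N).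

Definition fc_opt (R : numDomainType) (adj : rel T) (w' : {set T} -> R) (r : R) : Prop :=
  (exists S F, forest_cover adj S F /\ weighted_index w' S F = r) /\
  (forall S F, forest_cover adj S F -> r <= weighted_index w' S F).

End Graphs.

Definition wprime (R : realFieldType) (T : finType) (w : {set T} -> R) (lambda : R)
  : {set T} -> R :=
  fun e => if lambda / 2 < w e then 1 else 2 * w e / lambda.

(* Let T_1, ..., T_k be an optimal bounded forest cover. Each T_i has w'-weight at most 2:
   edges with w_e > lambda/2 cost 1 < 2 w_e / lambda, the others cost exactly 2 w_e / lambda,
   and w(T_i) <= lambda.  A spanning forest F of the union of the T_i covers the same vertices,
   uses only edges of the T_i, and has at most k components (each T_i lies in one of them),
   so wi(F) <= 2k + k. *)

From mathcomp Require Import all_boot all_order all_algebra.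
From mathcomp Require Import lra.

Set Implicit Arguments.
Unset Strict Implicit.
Unset Printing Implicit Defensive.
Import Order.TTheory GRing.Theory Num.Theory.
Local Open Scope ring_scope.

Section Forests.
Variable T : finType.
Implicit Types (F U : {set {set T}}) (S : {set T}).

Lemma erel_sym F : symmetric (erel F).
Proof. by move=> x y; rewrite /erel setUC. Qed.

Lemma erel_connect_sym F : connect_sym (erel F).
Proof. exact: sym_connect_sym (@erel_sym F). Qed.

Lemma erel_setD1 F e x y : erel (F :\ e) x y = ([set x; y] != e) && erel F x y.
Proof. exact: in_setD1. Qed.

Lemma connect_erel_sub F U x y :
  F \subset U -> connect (erel F) x y -> connect (erel U) x y.
Proof.
move=> FU; apply: connect_sub => a b Fab.
by apply: connect1; rewrite /erel (subsetP FU).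
Qed.

Lemma connect_erel_setD1 F x z :
  [set x; z] \in F -> connect (erel (F :\ [set x; z])) x z ->
  connect (erel (F :\ [set x; z])) =2 connect (erel F).
Proof.
move=> xzF cxz a b; apply/idP/idP; first exact/connect_erel_sub/subsetDl.
apply: connect_sub => c d cd.
have [e_cd|ne_cd] := eqVneq [set c; d] [set x; z]; last first.
  by apply: connect1; rewrite erel_setD1 ne_cd.
have /set2P[->|->] : c \in [set x; z] by rewrite -e_cd set21.
  have /set2P[->|->] : d \in [set x; z] by rewrite -e_cd set22.
    exact: connect0.
  exact: cxz.
have /set2P[->|->] : d \in [set x; z] by rewrite -e_cd set22.
  by rewrite erel_connect_sym.
exact: connect0.
Qed.

(* The closing edge [set z; x] of a cycle x :: y :: r (with z its last vertex) is avoided by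
   the path x, y, r: its first edge is not {z, x} since y is neither x nor z, and no later
   edge contains x. *)
Lemma cycle_edge_redundant F p :
  uniq p -> (3 <= size p)%N -> cycle (erel F) p ->
  exists2 e, e \in F & connect (erel (F :\ e)) =2 connect (erel F).
Proof.
case: p => [|x [|y [|u r]]] //; move=> /andP[x_yr /andP[y_r _]] _.
rewrite /= rcons_path => /and4P[Fxy Fyu path_ur Fzx].
have path_yr : path (erel F) y (u :: r) by rewrite /= Fyu.
set z := last u r in Fzx; have Fxz : erel F x z by rewrite erel_sym.
have z_r : z \in u :: r by exact: mem_last.
exists [set x; z]; first exact: Fxz.
apply: connect_erel_setD1; first exact: Fxz.
apply/connectP; exists [:: y, u & r] => //=; apply/andP; split.
  rewrite erel_setD1 Fxy andbT; apply: contraNneq y_r => e_xy.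
  have /set2P[yx|->] : y \in [set x; z] by rewrite -e_xy set22.
    by move: x_yr; rewrite yx mem_head.
  exact: z_r.
have x_yr' : all (predC1 x) [:: y, u & r] by rewrite all_predC has_pred1.
apply: sub_in_path x_yr' path_yr => a b /= ax bx Fab.
rewrite erel_setD1 Fab andbT; apply/negP => /eqP e_ab.
have /set2P[xa|xb] : x \in [set a; b] by rewrite e_ab set21.
  by move: ax; rewrite -xa inE eqxx.
by move: bx; rewrite -xb inE eqxx.
Qed.

Lemma exists_spanning_forest U :
  exists2 F : {set {set T}}, F \subset U & acyclic F /\ connect (erel F) =2 connect (erel U).
Proof.
pose spans (F : {set {set T}}) := (F \subset U) &&
  [forall x, forall y, connect (erel F) x y == connect (erel U) x y].
have spansU : spans U by rewrite /spans subxx; apply/'forall_forallP => x y.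
case: (arg_minnP (fun F => #|F|) spansU) => F /andP[FU /'forall_forallP conn] Fmin.
have connF : connect (erel F) =2 connect (erel U) by move=> x y; apply/eqP/conn.
exists F => //; split=> // p p_uniq p_size; apply/negP => p_cycle.
have [e eF conn_e] := cycle_edge_redundant p_uniq p_size p_cycle.
have : spans (F :\ e).
  rewrite /spans (subset_trans (subsetDl _ _) FU).
  by apply/'forall_forallP => x y; rewrite conn_e connF.
by move/Fmin; rewrite (cardsD1 e F) eF ltnn.
Qed.

Lemma n_components_le (I : finType) S F (C : I -> {set T}) :
  S \subset \bigcup_i C i -> (forall i, connected_sub (C i) F) ->
  (n_components S F <= #|I|)%N.
Proof.
move=> S_C C_conn; pose comp x := [set y in S | connect (erel F) x y].
pose comp_of i := if [pick x in C i] is Some r then comp r else set0.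
have : [set comp x | x in S] \subset [set comp_of i | i in I].
  apply/subsetP => _ /imsetP[x xS ->].
  have /bigcupP[i _ xCi] := subsetP S_C x xS.
  apply/imsetP; exists i => //; rewrite /comp_of.
  case: pickP => [r rCi|/(_ x)]; last by rewrite xCi.
  apply/setP => y; rewrite !inE.
  by rewrite (same_connect (@erel_connect_sym F) (C_conn i r x rCi xCi)).
move/subset_leq_card/leq_trans; apply; exact: leq_imset_card.
Qed.

Lemma spanning_forest_of_trees (I : finType) (adj : rel T)
    (tr : I -> {set T} * {set {set T}}) :
  (forall i, is_tree adj (tr i).1 (tr i).2) -> vertex_cover adj (\bigcup_i (tr i).1) ->
  exists2 F : {set {set T}}, F \subset \bigcup_i (tr i).2 &
    forest_cover adj (\bigcup_i (tr i).1) F /\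
    (n_components (\bigcup_i (tr i).1) F <= #|I|)%N.
Proof.
move=> tr_tree cover; set U := \bigcup_i (tr i).2.
have [F FU [F_acyclic connF]] := exists_spanning_forest U.
exists F => //; split; last first.
  apply: (n_components_le (C := fun i => (tr i).1)) => // i x y xi yi.
  case: (tr_tree i) => _ _ /(_ x y xi yi) conn_i _.
  by rewrite connF; apply: connect_erel_sub conn_i; exact: (bigcup_sup i).
split=> //; split=> //; split.
  by apply: subset_trans FU _; apply/bigcupsP => i _; case: (tr_tree i) => [[]].
move=> f /(subsetP FU) /bigcupP[i _ f_i]; case: (tr_tree i) => [[_ sub_i] _ _ _].
by apply: subset_trans (sub_i f f_i) _; exact: (bigcup_sup i).
Qed.

End Forests.

Section Weights.
Variables (R : numDomainType) (T : finType) (w : {set T} -> R).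
Implicit Types (F G : {set {set T}}).

Lemma weight_subset F G :
  F \subset G -> {in G, forall e, 0 <= w e} -> weight w F <= weight w G.
Proof.
move=> FG w_ge0; rewrite /weight [leRHS](big_setID F) /= (setIidPr FG) lerDl.
by apply: sumr_ge0 => e /setDP[eG _]; exact: w_ge0.
Qed.

Lemma weight_setU F G :
  {in G, forall e, 0 <= w e} -> weight w (F :|: G) <= weight w F + weight w G.
Proof.
move=> w_ge0; rewrite /weight (big_setID F) /= (setIidPr (subsetUl F G)).
rewrite lerD2l setDUl setDv set0U; apply: weight_subset (subsetDl _ _) w_ge0.
Qed.

Lemma weight_bigcup (I : finType) (D : {set {set T}}) (E : I -> {set {set T}}) :
  {in D, forall e, 0 <= w e} -> (forall i, E i \subset D) ->
  weight w (\bigcup_i E i) <= \sum_i weight w (E i).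
Proof.
move=> w_ge0 ED.
pose bounded (F : {set {set T}}) (s : R) := (F \subset D) && (weight w F <= s).
suff /andP[] : bounded (\bigcup_i E i) (\sum_i weight w (E i)) by [].
apply: (big_ind2 bounded); first by rewrite /bounded sub0set /weight big_set0 lexx.
  move=> F s G t /andP[FD Fs] /andP[GD Gt]; rewrite /bounded subUset FD GD /=.
  apply: le_trans (weight_setU _ _) (lerD Fs Gt).
  by move=> e /(subsetP GD); exact: w_ge0.
by move=> i _; rewrite /bounded ED lexx.
Qed.

End Weights.

Section ModifiedWeights.
Variables (R : realFieldType) (T : finType) (w : {set T} -> R) (lambda : R).

Lemma wprime_ge0 e : 0 < w e <= lambda -> 0 <= wprime w lambda e.
Proof.
case/andP=> we_gt0 we_le; have lambda_gt0 := lt_le_trans we_gt0 we_le.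
by rewrite /wprime; case: ifP => // _; rewrite divr_ge0 ?ltW ?mulr_gt0.
Qed.

Lemma wprime_le e : 0 < w e <= lambda -> wprime w lambda e <= 2 * w e / lambda.
Proof.
case/andP=> we_gt0 we_le; have lambda_gt0 := lt_le_trans we_gt0 we_le.
rewrite /wprime; case: ifP => // /ltW; rewrite ler_pdivlMr // mul1r.
by rewrite ler_pdivrMr // mulrC.
Qed.

Lemma weight_wprime_le2 (F : {set {set T}}) :
  {in F, forall e, 0 < w e <= lambda} -> weight w F <= lambda ->
  weight (wprime w lambda) F <= 2.
Proof.
move=> w_in wF_le; rewrite /weight.
apply: le_trans (ler_sum _ (fun e eF => wprime_le (w_in e eF))) _.
have wF_ge0 : 0 <= weight w F.
  by apply: sumr_ge0 => e /w_in /andP[/ltW].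
rewrite -mulr_suml -mulr_sumr -/(weight w F).
have [lambda_gt0|lambda_le0] := ltrP 0 lambda.
  by rewrite ler_pdivrMr // ler_pM2l.
rewrite (le_trans _ (ler0n R 2)) // mulr_ge0_le0 ?mulr_ge0 //.
by rewrite invr_le0.
Qed.

End ModifiedWeights.

Theorem mainTheorem10 (R : realFieldType) (T : finType) (adj : rel T)
  (w : {set T} -> R) (lambda : R) (OPT : nat) (OPT' : R) :
  simple_graph adj ->
  0 <= lambda ->
  (forall e, e \in edges adj -> 0 < w e) ->
  (forall e, e \in edges adj -> w e <= lambda) ->
  bfc_opt adj w lambda OPT ->
  fc_opt adj (wprime w lambda) OPT' ->
  OPT' <= 3 * OPT%:R.
Proof.
move=> _ _ w_gt0 w_le [[trees [trees_tree [trees_w cover]]] _] [_ OPT'_min].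
have edges_w e : e \in edges adj -> 0 < w e <= lambda by move=> eE; rewrite w_gt0 ?w_le.
have trees_edges i : (trees i).2 \subset edges adj by case: (trees_tree i) => [[]].
have [F FU [F_cover n_F]] := spanning_forest_of_trees trees_tree cover.
have w'_tree i : weight (wprime w lambda) (trees i).2 <= 2.
  apply: weight_wprime_le2 (trees_w i) => e.
  by move=> /(subsetP (trees_edges i)) /edges_w.
have w'_F : weight (wprime w lambda) F <= 2 * OPT%:R.
  have w'_ge0 : {in edges adj, forall e, 0 <= wprime w lambda e}.
    by move=> e /edges_w /wprime_ge0.
  apply: le_trans (weight_subset FU _) _.
    by move=> e /bigcupP[i _ /(subsetP (trees_edges i)) /w'_ge0].
  apply: le_trans (weight_bigcup w'_ge0 trees_edges) _.
  apply: le_trans (ler_sum _ (fun i _ => w'_tree i)) _.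
  by rewrite sumr_const card_ord mulr_natr.
apply: le_trans (OPT'_min _ F F_cover) _; rewrite /weighted_index.
move: n_F; rewrite card_ord -(ler_nat R); lra.
Qed.
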